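(* Let $G$ be a split graph with vertex partition $\{X,Y\}$, where $X=\{v_1,\ldots,v_n\}$ is a maximal clique of $G$ and $Y=V(G)\setminus X$ is a stable set, and write $d_i=|N_G(v_i)\cap Y|$, with $d_1\ge\cdots\ge d_n$ and $d_{\lfloor n/2\rfloor}\ge 1$. If $n\ge 3$, then $G$ admits a decomposition into locally irregular subgraphs and $\chi'_{\rm irr}(G)\le 2$.
   Context: All graphs are finite and simple. A graph is locally irregular if any two adjacent vertices have distinct degrees. A locally irregular decomposition of $G$ is a collection of locally irregular subgraphs whose edge sets partition $E(G)$; for a graph admitting one, $\chi'_{\rm irr}(G)$ is the minimum number of subgraphs in such a decomposition. *)

(* A subgraph is given by its edge relation
   (a symmetric relation contained in e); vertices not incident to any of its
   edges play no role in local irregularity. *)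
From mathcomp Require Import all_boot.
Set Implicit Arguments. Unset Strict Implicit. Unset Printing Implicit Defensive.

Section Defs.
Variable T : finType.

Definition simple_graph (e : rel T) : Prop := symmetric e /\ irreflexive e.

Definition deg (h : rel T) (x : T) : nat := #|[set y | h x y]|.

Definition locally_irregular (h : rel T) : Prop :=
  forall x y, h x y -> deg h x <> deg h y.

Definition is_subgraph (e h : rel T) : Prop :=
  symmetric h /\ (forall x y, h x y -> e x y).

Definition irr_decomposition (e : rel T) (k : nat) (H : 'I_k -> rel T) : Prop :=
  [/\ forall i, is_subgraph e (H i),
      forall i, locally_irregular (H i),
      forall i, exists x y, H i x y
    & forall x y, e x y -> exists! i, H i x y].

Definition clique (e : rel T) (X : {set T}) : Prop :=
  forall x y, x \in X -> y \in X -> x != y -> e x y.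

Definition maximal_clique (e : rel T) (X : {set T}) : Prop :=
  clique e X /\ forall Z : {set T}, X \subset Z -> clique e Z -> Z = X.

Definition stable (e : rel T) (Y : {set T}) : Prop :=
  forall x y, x \in Y -> y \in Y -> ~~ e x y.

End Defs.

From mathcomp Require Import all_boot zify.

(* Split the clique X into a part P of floor(n/2) vertices and its complement
   Q in X, and rank every vertex of P (resp. Q) by the number of vertices of P
   (resp. Q) after it in the enumeration ([above]).  Colour red the edges inside
   Q, the edges from Q to Y = V \ X, and the edges pq with p in P, q in Q and
   rank p < rank q; colour all other edges blue.  In red, p in P has degree
   |Q| - 1 - rank p, q in Q has degree |Q| - 1 + rank q + d q, and a vertex of
   Y at most |Q|; in blue, p has degree |P| + rank p + d p, q has degree
   |P| - rank q, and a vertex of Y at most |P|.  Since d is nonincreasing,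
   adjacent vertices get distinct degrees provided every vertex of P has a
   neighbour in Y, and the last vertex of Q, if its only neighbour in Y is y,
   has in Q a vertex not adjacent to y.  Both hold when P consists of floor(n/2)
   of the first floor(n/2) + 1 vertices, chosen so that Q contains a vertex of
   X not adjacent to y, which exists by maximality of X. *)

Set Implicit Arguments. Unset Strict Implicit. Unset Printing Implicit Defensive.

Lemma count_iota_lt r N : r <= N -> count (fun i => i < r) (iota 0 N) = r.
Proof. by move=> rN; rewrite -size_filter (filter_iota_ltn 0 rN) size_iota. Qed.

Lemma card_set_count (T : finType) (A : {set T}) (P : pred T) :
  #|[set x in A | P x]| = count P (enum A).
Proof.
rewrite cardE setIdE (perm_size (enum_setI _ _)) size_filter.
by apply: eq_count => x; rewrite inE.
Qed.

Section Above.
Variable n : nat.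
Implicit Types (A : {set 'I_n}) (i j : 'I_n).

Lemma card_ord_lt r : r <= n -> #|[set i : 'I_n | i < r]| = r.
Proof.
move=> rn; rewrite -[[set i : 'I_n | i < r]]setTI -setIdE card_set_count enum_setT.
by rewrite -enumT -[RHS](count_iota_lt rn) -val_enum_ord count_map.
Qed.

Definition above A i := #|[set j in A | i < j]|.

Lemma above_lt A i j : i < j -> j \in A -> above A j < above A i.
Proof.
move=> ij jA; apply: proper_card; apply/properP; split.
  by apply/subsetP => k; rewrite !inE => /andP[-> /(ltn_trans ij) ->].
by exists j; rewrite !inE ?jA ?ij // ltnn andbF.
Qed.

Lemma above_lt_card A i : i \in A -> above A i < #|A|.
Proof.
move=> iA; apply: proper_card; apply/properP; split.
  by apply/subsetP => k; rewrite inE => /andP[].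
by exists i; rewrite // inE ltnn andbF.
Qed.

Lemma above_inj A : {in A &, injective (above A)}.
Proof.
move=> i j iA jA; case: (ltngtP i j) => [ij|ji|/val_inj //].
  by move/eqP; rewrite gtn_eqF // above_lt.
by move/eqP; rewrite ltn_eqF // above_lt.
Qed.

Lemma card_above_lt A r : r <= #|A| -> #|[set i in A | above A i < r]| = r.
Proof.
move=> rA; rewrite card_set_count -(count_map (above A) (fun k => k < r)).
suff /permP-> : perm_eq (map (above A) (enum A)) (iota 0 #|A|).
  exact: count_iota_lt.
have uniq_above : uniq (map (above A) (enum A)).
  by rewrite map_inj_in_uniq ?enum_uniq // => i j; rewrite !mem_enum; apply: above_inj.
apply: uniq_perm; rewrite ?iota_uniq //.
apply: (uniq_min_size uniq_above _ _).2; last by rewrite size_map size_iota cardE.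
by move=> _ /mapP[i iA ->]; rewrite mem_iota above_lt_card // -mem_enum.
Qed.

Lemma card_above_ge A r : r <= #|A| -> #|[set i in A | r <= above A i]| = #|A| - r.
Proof.
move=> rA; have := cardsID [set i | above A i < r] A.
rewrite -setIdE card_above_lt // => <-; rewrite addKn.
by apply: eq_card => i; rewrite !inE -leqNgt andbC.
Qed.

End Above.

Lemma above_eq0 n (A : {set 'I_n.+1}) (i : 'I_n.+1) :
  ord_max \in A -> above A i = 0 -> i = ord_max.
Proof.
move=> maxA /eqP; apply: contraTeq => i_max; rewrite -lt0n; apply/card_gt0P.
exists ord_max; rewrite inE maxA ltn_neqAle leq_ord andbT.
by apply: contra i_max => /eqP/val_inj ->.
Qed.

Lemma ord2_neq0 (k : 'I_2) : k != ord0 -> k = ord_max.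
Proof. by case: k => [[|[|//]]] // ? _; apply: val_inj. Qed.

Definition deg_in (T : finType) (e : rel T) (Y : {set T}) (x : T) : nat :=
  #|[set y in Y | e x y]|.

Lemma maximal_clique_nonadj (T : finType) (e : rel T) (X : {set T}) (t : T) :
  symmetric e -> maximal_clique e X -> t \notin X -> exists2 x, x \in X & ~~ e x t.
Proof.
move=> e_sym [X_clique X_max] tX; apply/exists_inP; apply: contraT => /exists_inPn adj.
have tX_clique : clique e (t |: X).
  move=> x y; rewrite !inE => /predU1P[-> | xX] /predU1P[-> | yX]; rewrite ?eqxx //.
  - by move=> _; rewrite e_sym; apply/negPn/adj.
  - by move=> _; apply/negPn/adj.
  - exact: X_clique.
by move: tX; rewrite -(X_max _ (subsetUr _ _) tX_clique) setU11.
Qed.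

Section SplitDecomposition.
Variables (T : finType) (e : rel T) (X : {set T}) (n : nat) (v : 'I_n -> T).
Hypotheses (e_sym : symmetric e) (e_irr : irreflexive e).
Hypotheses (X_clique : clique e X) (Y_stable : stable e (~: X)).
Hypotheses (v_inj : injective v) (v_onto : [set v i | i : 'I_n] = X).

Local Notation d i := (deg_in e (~: X) (v i)).

Hypothesis d_sorted : forall i j : 'I_n, i <= j -> d j <= d i.

Lemma inX x : x \in X -> exists i, x = v i.
Proof. by rewrite -v_onto => /imsetP[i _ ->]; exists i. Qed.

Lemma Y_nonadj x y : x \notin X -> y \notin X -> e x y = false.
Proof. by move=> xX yX; apply/negbTE/Y_stable; rewrite inE. Qed.

Lemma v_adj i j : e (v i) (v j) = (i != j).
Proof.
case: eqP => [-> | /eqP ij]; first exact: e_irr.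
by apply: X_clique; rewrite -?v_onto ?imset_f // (inj_eq v_inj).
Qed.

Lemma card_nbr x (P : pred T) :
  #|[set y | e x y && P y]| =
  #|[set j | e x (v j) && P (v j)]| + #|[set y in ~: X | e x y && P y]|.
Proof.
rewrite -(cardsID X); congr (_ + _); last by apply: eq_card => y; rewrite !inE andbC.
rewrite -(card_imset _ v_inj); apply: eq_card => y; rewrite !inE.
apply/andP/imsetP => [[/andP[exy Py] /inX[j def_y]] | [j]].
  by exists j; rewrite // inE -def_y exy.
by rewrite inE => /andP[exy Py] ->; rewrite exy -v_onto imset_f.
Qed.

Definition pos (x : T) : option 'I_n := [pick i | v i == x].

Lemma pos_v i : pos (v i) = Some i.
Proof. by rewrite /pos; case: pickP => [j /eqP/v_inj -> // | /(_ i)]; rewrite eqxx. Qed.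

Lemma pos_Y x : x \notin X -> pos x = None.
Proof.
rewrite /pos; case: pickP => [j /eqP <- | //].
by rewrite -v_onto imset_f.
Qed.

Variable S : {set 'I_n}.

Definition is_red (o o' : option 'I_n) : bool :=
  match o, o' with
  | Some i, Some j =>
      if i \in S then (j \notin S) && (above S i < above (~: S) j)
      else (j \in S) ==> (above S j < above (~: S) i)
  | Some i, None | None, Some i => i \notin S
  | None, None => false
  end.

Lemma is_red_sym o o' : is_red o o' = is_red o' o.
Proof. by case: o o' => [i|] [j|] //=; case: (i \in S); case: (j \in S). Qed.

Definition colour (b : bool) : rel T := fun x y => e x y && (is_red (pos x) (pos y) == b).

Local Notation red := (colour true).
Local Notation blue := (colour false).

Lemma colour_sym b : symmetric (colour b).
Proof. by move=> x y; rewrite /colour e_sym is_red_sym. Qed.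

Lemma deg_colour_v b i :
  deg (colour b) (v i) =
  #|[set j | (j != i) && (is_red (Some i) (Some j) == b)]| +
  (if is_red (Some i) None == b then d i else 0).
Proof.
rewrite /deg /colour pos_v card_nbr; congr (_ + _).
  by apply: eq_card => j; rewrite !inE v_adj pos_v eq_sym.
rewrite /deg_in; case: ifP => c.
  by apply: eq_card => y; rewrite !inE; case: (boolP (y \in X)) => //= yX; rewrite pos_Y ?c ?andbT.
apply/eqP; rewrite cards_eq0; apply/eqP/setP => y; rewrite !inE.
by case: (boolP (y \in X)) => //= yX; rewrite pos_Y ?c ?andbF.
Qed.

Lemma deg_colour_Y b t :
  t \notin X -> deg (colour b) t = #|[set j | e t (v j) && (is_red None (Some j) == b)]|.
Proof.
move=> tX; rewrite /deg /colour pos_Y // card_nbr.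
rewrite [X in _ + X](_ : _ = 0) ?addn0; last first.
  apply/eqP; rewrite cards_eq0; apply/eqP/setP => y; rewrite !inE.
  by apply/andP => -[yX /andP[]]; rewrite Y_nonadj.
by apply: eq_card => j; rewrite !inE pos_v.
Qed.

Lemma colour_irregular b :
  (forall i j, colour b (v i) (v j) -> deg (colour b) (v i) <> deg (colour b) (v j)) ->
  (forall i t, t \notin X -> colour b (v i) t -> deg (colour b) (v i) <> deg (colour b) t) ->
  locally_irregular (colour b).
Proof.
move=> irr_XX irr_XY x y.
case: (boolP (x \in X)) => [/inX[i ->] | xX]; case: (boolP (y \in X)) => [/inX[j ->] | yX] bxy.
- exact: irr_XX.
- exact: irr_XY.
- by apply: nesym; apply: irr_XY; rewrite // colour_sym.
- by case/andP: bxy; rewrite Y_nonadj.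
Qed.

Lemma card_adj_le (A : {set 'I_n}) t : #|[set j in A | e t (v j)]| <= #|A|.
Proof. by apply/subset_leq_card/subsetP => j; rewrite inE => /andP[]. Qed.

Lemma card_adj_lt (A : {set 'I_n}) t j :
  j \in A -> ~~ e (v j) t -> #|[set j in A | e t (v j)]| < #|A|.
Proof.
move=> jA nadj; apply/proper_card/properP; split.
  by apply/subsetP => k; rewrite inE => /andP[].
by exists j; rewrite // inE e_sym (negbTE nadj) andbF.
Qed.

Lemma above_d_inj (A : {set 'I_n}) i j :
  i \in A -> j \in A -> i != j -> above A i + d i != above A j + d j.
Proof.
move=> iA jA; case: (ltngtP i j) => [ij | ji | /val_inj->]; last by rewrite eqxx.
  by have := above_lt ij jA; have := d_sorted (ltnW ij); lia.
by have := above_lt ji iA; have := d_sorted (ltnW ji); lia.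
Qed.

Hypotheses (S_le : #|S| <= #|~: S|) (S_ge : #|~: S| <= #|S|.+1).

Lemma deg_red_S i : i \in S -> deg red (v i) = #|~: S| - (above S i).+1.
Proof.
move=> iS; rewrite deg_colour_v /= iS addn0 -card_above_ge; last first.
  by apply: leq_trans S_le; apply: above_lt_card.
apply: eq_card => j; rewrite !inE eqb_id.
case: (boolP (j \in S)) => jS; rewrite ?andbF //=.
by have -> : j != i by apply: contraNneq jS => ->.
Qed.

Lemma deg_red_notS j : j \notin S -> deg red (v j) = #|~: S|.-1 + above (~: S) j + d j.
Proof.
move=> jS; rewrite deg_colour_v /= (negbTE jS) /=; congr (_ + _).
rewrite -(cardsID S) addnC; congr (_ + _).
  have := cardsD1 j (~: S); rewrite inE jS add1n => -> /=.
  apply: eq_card => i; rewrite !inE.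
  by case: (i \in S); rewrite /= ?andbT ?andbF.
rewrite -[RHS](@card_above_lt _ S); last first.
  by rewrite -ltnS; apply: leq_trans S_ge; apply: above_lt_card; rewrite inE.
apply: eq_card => i; rewrite !inE eqb_id.
case: (boolP (i \in S)) => iS; rewrite ?andbF //=.
by rewrite andbT; have -> : i != j by apply: contraTneq iS => ->.
Qed.

Lemma deg_red_Y t : t \notin X -> deg red t = #|[set j in ~: S | e t (v j)]|.
Proof. by move=> tX; rewrite deg_colour_Y //; apply: eq_card => j; rewrite !inE eqb_id andbC. Qed.

Lemma deg_blue_S i : i \in S -> deg blue (v i) = #|S| + above S i + d i.
Proof.
move=> iS; rewrite deg_colour_v /= iS /=; congr (_ + _).
rewrite -(cardsID S) (cardsD1 i S) iS add1n addSnnS; congr (_ + _).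
  by apply: eq_card => j; rewrite !inE; case: (j \in S); rewrite ?andbT ?andbF.
rewrite -[RHS](@card_above_lt _ (~: S)); last first.
  by apply: leq_trans S_le; apply: above_lt_card.
apply: eq_card => j; rewrite !inE; case: (boolP (j \in S)) => jS //=.
by rewrite eqbF_neg -leqNgt ltnS; have -> : j != i by apply: contraNneq jS => ->.
Qed.

Lemma deg_blue_notS j : j \notin S -> deg blue (v j) = #|S| - above (~: S) j.
Proof.
move=> jS; rewrite deg_colour_v /= (negbTE jS) /= addn0 -card_above_ge; last first.
  by rewrite -ltnS; apply: leq_trans S_ge; apply: above_lt_card; rewrite inE.
apply: eq_card => i; rewrite !inE.
case: (boolP (i \in S)) => iS; rewrite /= ?andbF // eqbF_neg -leqNgt.
by have -> : i != j by apply: contraTneq iS => ->.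
Qed.

Lemma deg_blue_Y t : t \notin X -> deg blue t = #|[set j in S | e t (v j)]|.
Proof. by move=> tX; rewrite deg_colour_Y //; apply: eq_card => j; rewrite !inE eqbF_neg negbK andbC. Qed.

Hypothesis d_S : {in S, forall i, 0 < d i}.
Hypothesis d_bottom : forall j, j \notin S -> above (~: S) j = 0 ->
  forall t, t \notin X -> e (v j) t -> 1 < d j \/ exists2 j', j' \notin S & ~~ e (v j') t.

Lemma red_irregular : locally_irregular red.
Proof.
apply: colour_irregular => [i j | i t tX].
  rewrite /colour !pos_v v_adj eqb_id => /andP[ij] /=.
  case: (boolP (i \in S)) => iS; case: (boolP (j \in S)) => jS //= rij.
  - by rewrite deg_red_S // deg_red_notS //; lia.
  - by rewrite deg_red_notS // deg_red_S //; lia.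
  - rewrite !deg_red_notS //; apply/eqP; rewrite -!addnA eqn_add2l.
    by apply: above_d_inj; rewrite ?inE.
rewrite /colour pos_v pos_Y // eqb_id /= => /andP[et iS].
rewrite deg_red_notS // deg_red_Y //.
have d_pos : 0 < d i by apply/card_gt0P; exists t; rewrite !inE tX et.
have := card_adj_le (~: S) t.
case: (posnP (above (~: S) i)) => [bottom | ]; last lia.
case: (d_bottom iS bottom tX et) => [| [j jS nadj]]; first lia.
have := @card_adj_lt (~: S) t j; rewrite inE => /(_ jS nadj); lia.
Qed.

Lemma blue_irregular : locally_irregular blue.
Proof.
apply: colour_irregular => [i j | i t tX].
  rewrite /colour !pos_v v_adj eqbF_neg => /andP[ij] /=.
  case: (boolP (i \in S)) => iS; case: (boolP (j \in S)) => jS //= rij.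
  - rewrite !deg_blue_S //; apply/eqP; rewrite -!addnA eqn_add2l.
    exact: above_d_inj.
  - by rewrite deg_blue_S // deg_blue_notS //; have := d_S iS; lia.
  - by rewrite deg_blue_notS // deg_blue_S //; have := d_S jS; lia.
rewrite /colour pos_v pos_Y // eqbF_neg /= negbK => /andP[et iS].
by rewrite deg_blue_S // deg_blue_Y //; have := card_adj_le S t; have := d_S iS; lia.
Qed.

Hypothesis notS_gt1 : 1 < #|~: S|.

Lemma red_edge : exists x y, red x y.
Proof.
have /card_gt1P[i [j [iS jS ij]]] := notS_gt1; rewrite !inE in iS jS.
by exists (v i), (v j); rewrite /colour !pos_v v_adj ij /= (negbTE iS) (negbTE jS).
Qed.

Lemma blue_edge : exists x y, blue x y.
Proof.
have /card_gt0P[i iS] : 0 < #|S| by lia.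
have /card_gt0P[t] := d_S iS; rewrite !inE => /andP[tX et].
by exists (v i), t; rewrite /colour pos_v pos_Y // et /= iS.
Qed.

Theorem split_irr_decomposition : exists H : 'I_2 -> rel T, irr_decomposition e H.
Proof.
exists (fun k => colour (k == ord0)); split => [k | k | k | x y exy].
- by split; [exact: colour_sym | move=> x y /andP[]].
- by case: (k == ord0); [exact: red_irregular | exact: blue_irregular].
- by case: (k == ord0); [exact: red_edge | exact: blue_edge].
exists (if is_red (pos x) (pos y) then ord0 else ord_max); split.
  by rewrite /colour exy; case: is_red.
move=> k /andP[_ /eqP]; case: is_red => /esym; first by move/eqP.
by move/negbT/ord2_neq0.
Qed.

End SplitDecomposition.

Section BalancedPart.
Variables (T : finType) (e : rel T) (X : {set T}) (n : nat) (v : 'I_n.+1 -> T).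
Hypotheses (e_sym : symmetric e) (X_max : maximal_clique e X).
Hypothesis v_onto : [set v i | i : 'I_n.+1] = X.

Local Notation d i := (deg_in e (~: X) (v i)).
Local Notation k := n.+1./2.

Hypothesis d_sorted : forall i j : 'I_n.+1, i <= j -> d j <= d i.
Hypothesis d_half : forall i : 'I_n.+1, i.+1 = k -> 1 <= d i.
Hypothesis n_gt1 : 1 < n.

Definition part (l m : nat) : {set 'I_n.+1} := [set i : 'I_n.+1 | (i <= l) && (i != m :> nat)].

Lemma card_part l m : m <= l <= n -> #|part l m| = l.
Proof.
case/andP=> ml ln; have mn : m < n.+1 by lia.
have := cardsD1 (Ordinal mn) [set i : 'I_n.+1 | i < l.+1].
rewrite card_ord_lt // inE /= ltnS ml add1n => -[card_l]; rewrite [RHS]card_l.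
by apply: eq_card => i; rewrite !inE andbC ltnS.
Qed.

Lemma ord_max_notin_part l m : l < n -> ord_max \notin part l m.
Proof. by move=> ln; rewrite inE negb_and -ltnNge ln. Qed.

Lemma exists_part : exists2 m, m <= k &
  {in part k m, forall i, 0 < d i} /\
  forall t, t \notin X -> e (v ord_max) t ->
    1 < d ord_max \/ exists2 j, j \notin part k m & ~~ e (v j) t.
Proof.
case: (boolP (d ord_max == 1)) => [/cards1P[t0 nbr_max] | d_max].
  have : t0 \in [set y in ~: X | e (v ord_max) y] by rewrite nbr_max set11.
  rewrite !inE => /andP[t0X _].
  have [x xX nadj] := maximal_clique_nonadj e_sym X_max t0X.
  rewrite -v_onto in xX; have /imsetP[m0 _ def_x] := xX; subst x.
  exists (minn m0 k); first exact: geq_minr.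
  split=> [i _ | t tX et].
    have d_max : d ord_max = 1 by rewrite /deg_in nbr_max cards1.
    by rewrite -d_max; apply: (d_sorted (j := ord_max)); apply: leq_ord.
  right; exists m0; last first.
    have : t \in [set y in ~: X | e (v ord_max) y] by rewrite !inE tX et.
    by rewrite nbr_max => /set1P->.
  by rewrite inE; case: leqP => //= _; rewrite negbK.
have half := odd_double_half n.+1.
exists k => //; split=> [i | t tX et].
  rewrite inE => /andP[ik i_k].
  have k1 : k.-1 < n.+1 by lia.
  apply: leq_trans (d_half (i := Ordinal k1) _) (d_sorted _) => /=; lia.
left; rewrite ltn_neqAle eq_sym d_max; apply/card_gt0P.
by exists t; rewrite !inE tX et.
Qed.

End BalancedPart.

Theorem lemma2p4 (T : finType) (e : rel T) (X : {set T}) (n : nat)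
    (v : 'I_n -> T) :
  simple_graph e ->
  maximal_clique e X ->
  stable e (~: X) ->
  injective v ->
  [set v i | i : 'I_n] = X ->
  (* d_i = |N(v_i) ∩ Y| is nonincreasing along the enumeration *)
  (forall i j : 'I_n, (i <= j)%N ->
     (#|[set y in ~: X | e (v j) y]| <= #|[set y in ~: X | e (v i) y]|)%N) ->
  (* d_{floor(n/2)} >= 1, with 1-based indexing of v_1..v_n *)
  (forall i : 'I_n, i.+1 = n./2 -> (1 <= #|[set y in ~: X | e (v i) y]|)%N) ->
  (3 <= n)%N ->
  exists k : nat, (k <= 2)%N /\ exists H : 'I_k -> rel T, irr_decomposition e H.
Proof.
move=> [e_sym e_irr] X_max Y_stable v_inj v_onto d_sorted d_half n_ge3.
exists 2; split=> //.
case: n => [//|n] in v v_inj v_onto d_sorted d_half n_ge3 *.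
have [m m_le [d_part d_bottom]] := exists_part e_sym X_max v_onto d_sorted d_half n_ge3.
have half := odd_double_half n.+1.
have card_S : #|part n n.+1./2 m| = n.+1./2 by apply: card_part; lia.
have card_notS : #|~: part n n.+1./2 m| = n.+1 - n.+1./2.
  by have := cardsC (part n n.+1./2 m); rewrite card_ord card_S; lia.
have [X_clique _] := X_max.
apply: (split_irr_decomposition e_sym e_irr X_clique Y_stable v_inj v_onto d_sorted
          (S := part n n.+1./2 m)); rewrite ?card_S ?card_notS //; try lia.
by move=> j _ /above_eq0 -> //; rewrite inE ord_max_notin_part //; lia.
Qed.
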